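(* Let $L$ be a co-Heyting algebra, $a\in L$ and $d$ a positive integer. Then $\dim_L a\geq d$ if and only if there exist $x_0,\dots,x_d\in L$ with $0\neq x_d\ll x_{d-1}\ll\cdots\ll x_0\leq a$; and $\operatorname{codim}_L a\geq d$ if and only if there exist $x_0,\dots,x_d\in L$ with $a\leq x_d\ll x_{d-1}\ll\cdots\ll x_0$. In particular, there is a single positive existential first-order formula in the language $\{0,1,\vee,\wedge,-\}$ which defines the set $dL=\{a\in L:\operatorname{codim}_L a\ge d\}$ in every co-Heyting algebra $L$.
   Context: A co-Heyting algebra is a bounded distributive lattice $(L,0,1,\vee,\wedge)$ such that for all $a,b$ the element $a-b=\min\{c\in L: a\le b\vee c\}$ exists; it is regarded as a structure in the language $\{0,1,\vee,\wedge,-\}$. The strong order: $b\ll a$ iff $b\le a$ and $a-b=a$. Foundation rank in an ordered set: $\operatorname{rk}x\ge0$; $\operatorname{rk}x\ge\beta+1$ iff some $y<x$ has $\operatorname{rk}y\ge\beta$; at limits, $\operatorname{rk}x\ge\lambda$ iff $\operatorname{rk}x\ge\beta$ for all $\beta<\lambda$; cofoundation rank is foundation rank for the reverse order. $\operatorname{Spec}L$ is the set of prime filters ordered by inclusion; height/coheight of $\mathfrak p$ are its foundation/cofoundation ranks in $\operatorname{Spec}L$. $\dim_L a=\sup\{\operatorname{coheight}\mathfrak p: a\in\mathfrak p\in\operatorname{Spec}L\}$ and $\operatorname{codim}_L a=\min\{\operatorname{height}\mathfrak p: a\in\mathfrak p\in\operatorname{Spec}L\}$, with $\sup\emptyset=-\infty$,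 $\min\emptyset=+\infty$. *)

From HB Require Import structures.
From mathcomp Require Import all_boot all_order.
Set Implicit Arguments. Unset Strict Implicit. Unset Printing Implicit Defensive.
Import Order.LTheory.
Local Open Scope order_scope.

Section CoHeyting.
Context {disp : Order.disp_t} {L : tbDistrLatticeType disp}.

(* [sub a b] is a - b = min {c : a <= b \/ c}: it belongs to the set and is
   below every element of the set.  A co-Heyting algebra is a bounded
   distributive lattice together with such an operation. *)
Definition coHeyting_diff (sub : L -> L -> L) : Prop :=
  forall a b : L, a <= b `|` sub a b /\ (forall c, a <= b `|` c -> sub a b <= c).

Definition sll (sub : L -> L -> L) (b a : L) : Prop := b <= a /\ sub a b = a.

Definition prime_filter (p : L -> Prop) : Prop :=
  [/\ p \top, ~ p \bot,
      (forall x y, x <= y -> p x -> p y),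
      (forall x y, p x -> p y -> p (x `&` y)) &
      (forall x y, p (x `|` y) -> p x \/ p y)].

Definition spec_lt (p q : L -> Prop) : Prop :=
  (forall x, p x -> q x) /\ ~ (forall x, q x -> p x).

Fixpoint height_ge (n : nat) (p : L -> Prop) : Prop :=
  match n with
  | 0 => True
  | n'.+1 => exists q, prime_filter q /\ spec_lt q p /\ height_ge n' q
  end.

Fixpoint coheight_ge (n : nat) (p : L -> Prop) : Prop :=
  match n with
  | 0 => True
  | n'.+1 => exists q, prime_filter q /\ spec_lt p q /\ coheight_ge n' q
  end.

(* dim_L a >= d, for a natural number d >= 1:
   sup {coheight p : a in p} >= d  (sup of empty = -oo).  Since d is finite,
   the sup is >= d iff some coheight is >= d. *)
Definition dim_ge (a : L) (d : nat) : Prop :=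
  exists p, prime_filter p /\ p a /\ coheight_ge d p.

(* codim_L a >= d: min {height p : a in p} >= d (min of empty = +oo). *)
Definition codim_ge (a : L) (d : nat) : Prop :=
  forall p, prime_filter p -> p a -> height_ge d p.

End CoHeyting.

(* First-order syntax in the language {0,1,join,meet,-}; variables are de Bruijn
   indices. *)
Inductive cterm : Type :=
  | tvar of nat | tzero | tone
  | tjoin of cterm & cterm | tmeet of cterm & cterm | tsub of cterm & cterm.

(* positive existential formulas: atomic equations, /\, \/, exists
   (pex binds variable 0) *)
Inductive pexform : Type :=
  | peq of cterm & cterm
  | pand of pexform & pexform
  | por of pexform & pexform
  | pex of pexform.

Section Semantics.
Context {disp : Order.disp_t} {L : tbDistrLatticeType disp} (sub : L -> L -> L).

Fixpoint teval (e : nat -> L) (t : cterm) : L :=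
  match t with
  | tvar n => e n
  | tzero => \bot
  | tone => \top
  | tjoin s u => teval e s `|` teval e u
  | tmeet s u => teval e s `&` teval e u
  | tsub s u => sub (teval e s) (teval e u)
  end.

Definition scons (v : L) (e : nat -> L) : nat -> L :=
  fun n => match n with 0 => v | n'.+1 => e n' end.

Fixpoint holds (e : nat -> L) (f : pexform) : Prop :=
  match f with
  | peq s u => teval e s = teval e u
  | pand f g => holds e f /\ holds e g
  | por f g => holds e f \/ holds e g
  | pex f => exists v, holds (scons v e) f
  end.
End Semantics.

(* A difference [x - y] lies in a prime filter [p] iff some prime filter
   [q] included in [p] contains [x] but not [y] (prime filter theorem).  Hence
   [y << x] with [y] in [p] yields a prime filter strictly below [p] containing
   [x], so a chain [x_d << ... << x_0] gives a chain of prime filters of the same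
   length.  Conversely, if [q] is strictly below [p], [c] is in [p] but not in [q]
   and [x] is in [q], then the relative boundary [x /\ c /\ (x - c)] lies in [p]
   and strictly below [x] in the strong order, so chains of prime filters give
   chains of elements.  For the codimension, iterating
   [x |-> \/_(c in C) x /\ c /\ (x - c)] [d] times from [1] yields a directed
   family meeting every prime filter of height at least [d]; by the prime filter
   theorem [a] lies below one of its members.  The formula merely asserts such a
   chain above [a]. *)

From HB Require Import structures.
From mathcomp Require Import all_boot all_order.
From mathcomp Require classical_sets.
From Stdlib Require Import Classical.
Import Order.LTheory.
Local Open Scope order_scope.
Set Implicit Arguments. Unset Strict Implicit. Unset Printing Implicit Defensive.

Section PrimeFilterTheorem.
Context {disp : Order.disp_t} {L : tbDistrLatticeType disp}.

Definition ideal (I : L -> Prop) : Prop :=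
  [/\ I \bot, forall x y, x <= y -> I y -> I x & forall x y, I x -> I y -> I (x `|` y)].

Lemma ideal_joinr (I : L -> Prop) (x : L) :
  ideal I -> ideal (fun z => exists2 j, I j & z <= j `|` x).
Proof.
case=> I0 Idown Ijoin; split.
- by exists \bot; rewrite ?le0x.
- by move=> z z' le_zz' [j Ij le_z']; exists j => //; apply: le_trans le_z'.
- move=> z z' [j Ij le_z] [j' Ij' le_z']; exists (j `|` j'); first exact: Ijoin.
  rewrite leUx (le_trans le_z) ?(le_trans le_z') //.
  + by rewrite leU2 ?leUr.
  + by rewrite leU2 ?leUl.
Qed.

Lemma ideal_maximal_avoiding (I : L -> Prop) (a : L) : ideal I -> ~ I a ->
  exists A, [/\ ideal A, forall z, I z -> A z, ~ A a &
             forall x, ~ A x -> exists2 j, A j & a <= j `|` x].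
Proof.
move=> idI nIa; have [I0 _ _] := idI.
(* The last clause, rather than [I] included in [J], lets the union of an
   empty chain (the empty set) qualify, as Zorn's lemma requires. *)
pose P (J : L -> Prop) := [/\ forall x y, x <= y -> J y -> J x,
  forall x y, J x -> J y -> J (x `|` y), ~ J a & forall w, J w -> forall z, I z -> J z].
have [A [[Adown Ajoin nAa AI] maxA]] : exists A : classical_sets.set L,
    P A /\ forall B, classical_sets.proper A B -> ~ P B.
  apply: classical_sets.Zorn_bigcup => F FP Ftot; split.
  - move=> x y le_xy [X FX Xy]; exists X => //.
    by have [Xdown _ _ _] := FP X FX; exact: Xdown le_xy Xy.
  - move=> x y [X FX Xx] [Y FY Yy].
    have [XY|YX] := Ftot X Y FX FY.
    + by exists Y => //; have [_ Yjoin _ _] := FP Y FY; exact: Yjoin (XY _ Xx) Yy.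
    + by exists X => //; have [_ Xjoin _ _] := FP X FX; exact: Xjoin Xx (YX _ Yy).
  - by case=> X FX Xa; have [_ _ nXa _] := FP X FX.
  - by move=> w [X FX Xw] z Iz; exists X => //; have [_ _ _ XI] := FP X FX; exact: XI Xw z Iz.
have A0 : A \bot.
  apply: NNPP => nA0; apply: (maxA I); last by case: idI.
  split=> [z Az|IA]; last exact/nA0/IA.
  by case: nA0; apply: Adown Az; exact: le0x.
exists A; split=> // [z|x nAx]; first exact: AI A0 z.
have [_ Bdown Bjoin] := ideal_joinr x (And3 A0 Adown Ajoin).
apply: NNPP => nBa; apply: (maxA (fun z => exists2 j, A j & z <= j `|` x)).
- split=> [z Az|BA]; first by exists z; rewrite ?leUl.
  by apply/nAx/BA; exists \bot; rewrite ?leUr.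
- split=> // w _ z Iz; exists z; [exact: AI A0 z Iz | exact: leUl].
Qed.

Lemma prime_filter_compl (A : L -> Prop) (a : L) : ideal A -> ~ A a ->
  (forall x, ~ A x -> exists2 j, A j & a <= j `|` x) -> prime_filter (fun z => ~ A z).
Proof.
case=> A0 Adown Ajoin nAa Amax; split=> //.
- by move=> A1; apply/nAa/(Adown _ _ (lex1 a)).
- by move=> x y le_xy nAx Ay; apply/nAx/(Adown _ _ le_xy).
- move=> x y /Amax[j Aj le_a] /Amax[j' Aj' le_a'] Axy; apply: (nAa).
  apply: (Adown _ ((j `|` j') `|` (x `&` y))); last by apply: (Ajoin) => //; exact: Ajoin.
  rewrite joinIr lexI (le_trans le_a) ?(le_trans le_a') //.
  + by rewrite leU2 ?leUr.
  + by rewrite leU2 ?leUl.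
- move=> x y nAxy; apply: NNPP => /not_or_and[/NNPP Ax /NNPP Ay].
  exact/nAxy/Ajoin.
Qed.

Lemma prime_filter_separation (I : L -> Prop) (a : L) : ideal I -> ~ I a ->
  exists q, [/\ prime_filter q, q a & forall z, q z -> ~ I z].
Proof.
move=> idI nIa; have [A [idA IA nAa Amax]] := ideal_maximal_avoiding idI nIa.
by exists (fun z => ~ A z); split=> // [|z nAz /IA]; first exact: prime_filter_compl Amax.
Qed.

Lemma prime_filter_exists (x : L) : x != \bot -> exists2 p, prime_filter p & p x.
Proof.
move=> nx0; have idI : ideal (fun z : L => z <= \bot).
  split=> // [z z' /le_trans le_zz' /le_zz'//|z z' z0 z'0]; by rewrite leUx z0.
have [|p [pp px _]] := prime_filter_separation idI (a := x); last by exists p.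
by rewrite lex0; exact/negP.
Qed.

Lemma prime_filter_up (p : L -> Prop) (x y : L) : prime_filter p -> x <= y -> p x -> p y.
Proof. by case=> _ _ up _ _; exact: up. Qed.

End PrimeFilterTheorem.

Section CoHeyting.
Context {disp : Order.disp_t} {L : tbDistrLatticeType disp} (sub : L -> L -> L).
Hypothesis sub_spec : coHeyting_diff sub.

Lemma le_sub (a b : L) : a <= b `|` sub a b.
Proof. exact: (sub_spec a b).1. Qed.

Lemma sub_leP (a b c : L) : sub a b <= c <-> a <= b `|` c.
Proof.
split=> [le_sc|]; last exact: (sub_spec a b).2.
by apply: le_trans (le_sub a b) _; rewrite leU2.
Qed.

Lemma sub_le (a b : L) : sub a b <= a.
Proof. by apply/sub_leP; rewrite leUr. Qed.

Lemma sub_monol (a a' b : L) : a <= a' -> sub a b <= sub a' b.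
Proof. by move=> le_a; apply/sub_leP; apply: le_trans le_a (le_sub a' b). Qed.

Lemma sllP (y x : L) : sll sub y x <-> y <= x /\ x <= sub x y.
Proof.
split=> [[le_yx ->]|[le_yx le_x]]; split=> //.
by apply/le_anti; rewrite sub_le le_x.
Qed.

Lemma sll0x (x : L) : sll sub \bot x.
Proof. by apply/sllP; split; [exact: le0x | have := le_sub x \bot; rewrite join0x]. Qed.

Lemma sllU (y y' x : L) : sll sub y x -> sll sub y' x -> sll sub (y `|` y') x.
Proof.
move=> [le_yx subxy] [le_y'x subxy']; apply/sllP; split; first by rewrite leUx le_yx.
set t := sub x (y `|` y').
have le_x : x <= y `|` (y' `|` t) by rewrite joinA; exact: le_sub.
have le_x' : x <= y' `|` t by rewrite -[x in x <= _]subxy; apply/sub_leP.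
by rewrite -[x in x <= _]subxy'; apply/sub_leP.
Qed.

Definition boundary (x c : L) : L := x `&` c `&` sub x c.

Lemma boundary_sll (x c : L) : sll sub (boundary x c) x.
Proof.
set e := boundary x c; set t := sub x e.
have le_ex : e <= x by rewrite /e /boundary -meetA leIl.
have le_ec : e <= c by rewrite /e /boundary -meetA meetCA leIl.
have le_es : e <= sub x c by rewrite /e /boundary leIr.
have le_x : x <= e `|` t := le_sub x e.
apply/sllP; split=> //; apply: le_trans (le_sub x (sub x c)) _; rewrite leUx.
apply/andP; split; apply/sub_leP; apply: le_trans le_x _; exact: leU2.
Qed.

Lemma boundary_monol (x x' c : L) : x <= x' -> boundary x c <= boundary x' c.
Proof. by move=> le_x; apply: leI2; [apply: leI2 | apply: sub_monol]. Qed.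

Lemma prime_filter_sub (q : L -> Prop) (x c : L) :
  prime_filter q -> q x -> ~ q c -> q (sub x c).
Proof. by case=> _ _ up _ prime qx nqc; have /prime[/nqc|] := up _ _ (le_sub x c) qx. Qed.

Lemma prime_filter_sub_below (p : L -> Prop) (x y : L) : prime_filter p -> p (sub x y) ->
  exists q, [/\ prime_filter q, forall z, q z -> p z, q x & ~ q y].
Proof.
move=> pp psub; have [_ np0 pup _ pprime] := pp.
pose I z := exists2 w, ~ p w & z <= y `|` w.
have idI : ideal I.
  split=> [|z z' le_zz' [w nw le_z']|z z' [w nw le_z] [w' nw' le_z']].
  - by exists \bot; rewrite ?le0x.
  - by exists w => //; apply: le_trans le_z'.
  - exists (w `|` w'); first by case/pprime.
    by rewrite leUx (le_trans le_z) ?(le_trans le_z') // leU2 ?leUl ?leUr.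
have [|q [pq qx qI]] := prime_filter_separation idI (a := x).
  by case=> w nw /sub_leP le_w; apply/nw/(pup _ _ le_w).
exists q; split=> // [z qz|qy]; last by apply: (qI y qy); exists \bot; rewrite ?leUl.
by apply: NNPP => npz; apply: (qI z qz); exists z; rewrite ?leUr.
Qed.

Lemma spec_lt_sll (p : L -> Prop) (x y : L) : prime_filter p -> sll sub y x -> p y ->
  exists q, [/\ prime_filter q, spec_lt q p & q x].
Proof.
move=> pp [le_yx subxy] py; have px := prime_filter_up pp le_yx py.
have /(prime_filter_sub_below pp)[q [pq qp qx nqy]] : p (sub x y) by rewrite subxy.
by exists q; split=> //; split=> // pq'; exact/nqy/pq'.
Qed.

Lemma spec_lt_boundary (p q : L -> Prop) (x : L) : prime_filter p -> prime_filter q ->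
  spec_lt q p -> q x -> exists c, p (boundary x c).
Proof.
move=> pp pq [qp npq] qx.
have [c pc nqc] : exists2 c, p c & ~ q c.
  apply: NNPP => nc; apply: npq => z pz; apply: NNPP => nqz.
  exact: nc (ex_intro2 _ _ z pz nqz).
have [_ _ _ pmeet _] := pp; exists c.
by apply: (pmeet); [apply: (pmeet) => //; exact: qp | exact: qp (prime_filter_sub pq qx nqc)].
Qed.

Definition chain (n : nat) (x : nat -> L) : Prop :=
  forall i, (i < n)%N -> sll sub (x i.+1) (x i).

Lemma chainW (n : nat) (x : nat -> L) : chain n.+1 x -> chain n x.
Proof. by move=> hx i lt_in; apply/hx/ltnW. Qed.

Lemma chain_behead (n : nat) (x : nat -> L) : chain n.+1 x -> chain n (fun i => x i.+1).
Proof. by move=> hx i lt_in; exact: hx. Qed.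

Lemma chain_cons (n : nat) (x : nat -> L) (y : L) : chain n x -> sll sub (x 0%N) y ->
  chain n.+1 (fun i => if i is j.+1 then x j else y).
Proof. by move=> hx hy [|i] //= lt_in; exact: hx. Qed.

Lemma chain_rcons (n : nat) (x : nat -> L) (y : L) : chain n x -> sll sub y (x n) ->
  chain n.+1 (fun i => if (i <= n)%N then x i else y).
Proof.
move=> hx hy i; rewrite ltnS leq_eqVlt => /orP[/eqP->|lt_in]; first by rewrite eqxx ltnn.
by rewrite lt_in orbT; exact: hx.
Qed.

Lemma height_ge_chain (n : nat) (x : nat -> L) (p : L -> Prop) :
  chain n x -> prime_filter p -> p (x n) -> height_ge n p.
Proof.
elim: n p => [//|n IH] p hx pp pxn.
have [q [pq lt_qp qx]] := spec_lt_sll pp (hx n (ltnSn n)) pxn.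
by exists q; split=> //; split=> //; exact: IH (chainW hx) pq qx.
Qed.

Lemma coheight_ge_chain (n : nat) (x : nat -> L) (p : L -> Prop) :
  chain n x -> prime_filter p -> p (x n) ->
  exists q, [/\ prime_filter q, q (x 0%N) & coheight_ge n q].
Proof.
elim: n x => [|n IH] x hx pp pxn; first by exists p.
have [q [pq qx1 hq]] := IH _ (chain_behead hx) pp pxn.
have [r [pr lt_rq rx0]] := spec_lt_sll pq (hx 0%N isT) qx1.
by exists r; split=> //; exists q.
Qed.

Lemma chain_coheight_ge (n : nat) (p : L -> Prop) (y : L) :
  prime_filter p -> coheight_ge n p -> p y ->
  exists x, [/\ x 0%N = y, chain n x & x n != \bot].
Proof.
elim: n p y => [|n IH] p y pp hp py.
  by exists (fun _ => y); split=> //; apply/eqP => y0; case: pp => _ []; rewrite -y0.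
case: hp => q [pq [lt_pq hq]]; have [c qc] := spec_lt_boundary pq pp lt_pq py.
have [x [x0 hx nxn]] := IH q _ pq hq qc.
exists (fun i => if i is j.+1 then x j else y); split=> //.
by apply: chain_cons; rewrite ?x0 //; exact: boundary_sll.
Qed.

Lemma dim_geP (a : L) (d : nat) :
  dim_ge a d <-> exists x, [/\ x d != \bot, chain d x & x 0%N <= a].
Proof.
split=> [[p [pp [pa hp]]]|[x [nxd hx le_x0a]]].
  by have [x [x0 hx nxd]] := chain_coheight_ge pp hp pa; exists x; rewrite x0.
have [p pp pxd] := prime_filter_exists nxd.
have [q [pq qx0 hq]] := coheight_ge_chain hx pp pxd.
by exists q; split=> //; split=> //; exact: prime_filter_up pq le_x0a qx0.
Qed.

Definition boundary_join (x : L) (C : seq L) : L := \join_(c <- C) boundary x c.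

Lemma boundary_join_sll (x : L) (C : seq L) : sll sub (boundary_join x C) x.
Proof.
apply: (big_ind (fun y => sll sub y x)) => [|y y'|c _]; [exact: sll0x | exact: sllU |].
exact: boundary_sll.
Qed.

Lemma boundary_join_le (x x' : L) (C C' : seq L) :
  x <= x' -> {subset C <= C'} -> boundary_join x C <= boundary_join x' C'.
Proof.
move=> le_x sCC'; apply/joinsP_seq => c cC _.
by apply: joins_min_seq (sCC' _ cC) _ _ => //; exact: boundary_monol.
Qed.

Fixpoint reachable (k : nat) (y : L) : Prop :=
  if k is k'.+1 then exists x C, reachable k' x /\ y = boundary_join x C else y = \top.

Lemma reachable_chain (k : nat) (y : L) : reachable k y -> exists x, x k = y /\ chain k x.
Proof.
elim: k y => [|k IH] y /=; first by move=> ->; exists (fun _ => \top).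
case=> x [C [rx ->]]; have [z [zk hz]] := IH x rx.
exists (fun i => if (i <= k)%N then z i else boundary_join x C); split; first by rewrite ltnn.
by apply: chain_rcons hz _; rewrite zk; exact: boundary_join_sll.
Qed.

Lemma reachable_directed (k : nat) (y y' : L) : reachable k y -> reachable k y' ->
  exists z, [/\ reachable k z, y <= z & y' <= z].
Proof.
elim: k y y' => [|k IH] y y' /=; first by move=> -> ->; exists \top.
case=> x [C [rx ->]] [x' [C' [rx' ->]]]; have [z [rz le_xz le_x'z]] := IH x x' rx rx'.
exists (boundary_join z (C ++ C')); split; first by exists z, (C ++ C').
- by apply: boundary_join_le => // c cC; rewrite mem_cat cC.
- by apply: boundary_join_le => // c cC'; rewrite mem_cat cC' orbT.
Qed.

Lemma reachable_height_ge (k : nat) (p : L -> Prop) : prime_filter p -> height_ge k p ->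
  exists2 y, reachable k y & p y.
Proof.
elim: k p => [|k IH] p pp /=; first by exists \top => //; case: pp.
case=> q [pq [lt_qp hq]]; have [y ry qy] := IH q pq hq.
have [c pc] := spec_lt_boundary pp pq lt_qp qy.
by exists (boundary_join y [:: c]); [exists y, [:: c] | rewrite /boundary_join big_seq1].
Qed.

Lemma codim_geP (a : L) (d : nat) : codim_ge a d <-> exists x, a <= x d /\ chain d x.
Proof.
split=> [hc|[x [le_axd hx]] p pp pa]; last first.
  exact: height_ge_chain hx pp (prime_filter_up pp le_axd pa).
pose I z := exists2 y, reachable d y & z <= y.
have idI : ideal I.
  split=> [|z z' le_zz' [y ry le_z'y]|z z' [y ry le_zy] [y' ry' le_z'y']].
  - have [y ry] : exists y, reachable d y.
      by elim: (d) => [|k [y ry]]; [exists \top | exists (boundary_join y [::]), y, [::]].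
    by exists y; rewrite ?le0x.
  - by exists y => //; apply: le_trans le_z'y.
  - have [w [rw le_yw le_y'w]] := reachable_directed ry ry'.
    by exists w; rewrite // leUx (le_trans le_zy) ?(le_trans le_z'y').
have [[y ry le_ay]|nIa] := classic (I a).
  by have [x [xd hx]] := reachable_chain ry; exists x; rewrite xd.
have [q [pq qa qI]] := prime_filter_separation idI nIa.
by have [y ry qy] := reachable_height_ge pq (hc q pq qa); case: (qI y qy); exists y.
Qed.

End CoHeyting.

Definition le_form (s t : cterm) : pexform := peq (tjoin s t) t.

Definition sll_form (s t : cterm) : pexform := pand (le_form s t) (peq (tsub t s) t).

(* [chain_form k] says that variable 0 is the last element of a [<<]-chain of length [k]. *)
Fixpoint chain_form (k : nat) : pexform :=
  if k is k'.+1 then pex (pand (sll_form (tvar 1) (tvar 0)) (chain_form k'))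
  else peq tzero tzero.

Definition codim_form (d : nat) : pexform :=
  pex (pand (le_form (tvar 1) (tvar 0)) (chain_form d)).

Section Formulas.
Context {disp : Order.disp_t} {L : tbDistrLatticeType disp} (sub : L -> L -> L).

Lemma holds_le_form (e : nat -> L) (s t : cterm) :
  holds sub e (le_form s t) <-> teval sub e s <= teval sub e t.
Proof. by rewrite /= leEjoin; split=> /eqP. Qed.

Lemma holds_sll_form (e : nat -> L) (s t : cterm) :
  holds sub e (sll_form s t) <-> sll sub (teval sub e s) (teval sub e t).
Proof. by rewrite /sll -holds_le_form. Qed.

Lemma holds_chain_form (k : nat) (e : nat -> L) :
  holds sub e (chain_form k) <-> exists x, x k = e 0%N /\ chain sub k x.
Proof.
elim: k e => [|k IH] e; first by split=> // _; exists (fun _ => e 0%N).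
split=> [[v [/holds_sll_form /= sll_e0v /IH[x [xk hx]]]]|[x [xk hx]]].
  exists (fun i => if (i <= k)%N then x i else e 0%N); split; first by rewrite ltnn.
  by apply: chain_rcons hx _; rewrite xk.
exists (x k); split; first by apply/holds_sll_form; rewrite /= -xk; exact: hx.
by apply/IH; exists x; split=> //; exact: chainW.
Qed.

Lemma holds_codim_form (d : nat) (e : nat -> L) :
  holds sub e (codim_form d) <-> exists x, e 0%N <= x d /\ chain sub d x.
Proof.
split=> [[v [/holds_le_form le_e0v /holds_chain_form[x [xd hx]]]]|[x [le_e0x hx]]].
  by exists x; rewrite xd.
exists (x d); split; first exact/holds_le_form.
by apply/holds_chain_form; exists x.
Qed.

End Formulas.

Theorem theorem3p8 (d : nat) (hd : (0 < d)%N) :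
  (forall (disp : Order.disp_t) (L : tbDistrLatticeType disp) (sub : L -> L -> L),
     coHeyting_diff sub ->
     forall a : L,
       (dim_ge a d <->
        exists x : nat -> L,
          [/\ x d != \bot,
              (forall i, (i < d)%N -> sll sub (x i.+1) (x i)) &
              x 0%N <= a]) /\
       (codim_ge a d <->
        exists x : nat -> L,
          a <= x d /\ (forall i, (i < d)%N -> sll sub (x i.+1) (x i)))) /\
  (exists phi : pexform,
     forall (disp : Order.disp_t) (L : tbDistrLatticeType disp) (sub : L -> L -> L),
       coHeyting_diff sub ->
       forall (a : L) (e : nat -> L), e 0%N = a ->
         (holds sub e phi <-> codim_ge a d)).
Proof.
split=> [disp L sub sub_spec a|]; first by split; [exact: dim_geP | exact: codim_geP].
exists (codim_form d) => disp L sub sub_spec a e <-.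
exact: iff_trans (holds_codim_form sub d e) (iff_sym (codim_geP sub_spec _ d)).
Qed.
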